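(* For any coprime $r>1$ and $0<a<r$, on the Danilov resolution of $\frac1r(1,a,r-a)$ the $\mathbb Q$-divisors $R_i$ satisfy, for all $i=0,\dots,r-1$ (indices mod $r$), \[X_i=D_X+R_i-R_{i+1},\qquad Y_i=D_Y+R_i-R_{i+a},\qquad Z_i=D_Z+R_i-R_{i-a}.\]
   Context: Notation: for integers $s$ and $t>0$, $\langle s\rangle_t$ is the least non-negative integer congruent to $s$ modulo $t$. A pair of integers $(r,a)$ is admissible if $r\ge1$, $0\le a<r$, $\gcd(r,a)=1$ (so $a=0$ only for $r=1$). For admissible $(r,a)$ put $N(r,a)=\mathbb Z^3+\mathbb Z\cdot\frac1r(1,a,r-a)\subset\mathbb Q^3$; $e_1,e_2,e_3$ is the standard basis, $e_j^*$ the $j$-th coordinate function, and $\Delta(r,a)$ the cone spanned by $e_1,e_2,e_3$. Let $b$ be an inverse of $a$ modulo $r$ and $p_i=\frac1r(\langle -ib\rangle_r,r-i,i)$, $i=0,\dots,r$ (so $p_0=e_2$, $p_r=e_3$, $p_{r-a}=\frac1r(1,a,r-a)$). For $r>1$ let $(r_L,a_L)=(r-a,\langle r\rangle_{r-a})$, $(r_R,a_R)=(a,\langle -r\rangle_a)$; there are lattice isomorphisms $L:N(r_L,a_L)\to N(r,a)$, $R:N(r_R,a_R)\to N(r,a)$ with $L(e_1)=e_1$, $L(e_2)=e_2$, $L(e_3)=p_{r-a}$, $R(e_1)=e_1$, $R(e_2)=p_{r-a}$, $R(e_3)=e_3$. The Danilov fan $\Sigma(r,a)$ is defined recursively: $\Sigma(1,0)$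 is $\Delta(1,0)$ with its faces; for $r>1$, $\Sigma(r,a)$ consists of the cone spanned by $e_2,e_3,p_{r-a}$ with its faces, together with $L(\Sigma(r_L,a_L))$ and $R(\Sigma(r_R,a_R))$. The Danilov resolution $Y$ is the smooth toric variety of $\Sigma(r,a)$, with torus $T$; its rays are spanned by $e_1,p_0,\dots,p_r$; $D_i$ is the $T$-invariant prime divisor of the ray through $p_i$ and $E_j$ that of $e_j$. The permutation $\tau(r,a,\cdot)$ of $\{0,\dots,r-1\}$: if $a\in\{1,r-1\}$, $\tau(r,a,i)=\langle ai-1\rangle_r$; otherwise $\tau(r,a,i)=\tau(r-a,\langle r\rangle_{r-a},\langle i\rangle_{r-a})$ for $i\ge a$ and $\tau(r,a,i)=(r-a)+\tau(a,\langle -r\rangle_a,i)$ for $i<a$. With indices mod $r$, on $Y$ define $Y_{i-a}=\sum_{k=0}^{\tau(r,a,i)}D_k$, $Z_i=\sum_{k=\tau(r,a,i)+1}^{r}D_k$ ($i=0,\dots,r-1$), and $X_0,\dots,X_{r-1}$ the unique divisors with $X_0=E_1$ and $X_i+Z_{i+1}=Z_i+X_{i-a}$ for all $i$. Define the $\mathbb Q$-divisors $D_X=E_1+\sum_{i=0}^r e_1^*(p_i)D_i$, $D_Y=\sum_{i=0}^r e_2^*(p_i)D_i$, $D_Z=\sum_{i=0}^r e_3^*(p_i)D_i$, and let $R_0,\dots,R_{r-1}$ be the unique $\mathbb Q$-divisors with $R_0=0$ and $Z_i=D_Z+R_i-R_{i-a}$ for all $i$. *)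

From HB Require Import structures.
From mathcomp Require Import all_boot all_order all_algebra.
Unset Printing Implicit Defensive.
Import Order.TTheory GRing.Theory Num.Theory.

(* The permutation tau(r,a,.) of {0,...,r-1}, defined by recursion on r
   (fuel n >= r suffices, since r strictly decreases along the recursion).
   <s>_t for natural numbers is computed with %% ; <a i - 1>_r = (a i + r - 1) %% r,
   <-r>_a = (a - r %% a) %% a. *)
Fixpoint tau_fuel (n r a i : nat) : nat :=
  match n with
  | 0 => 0
  | n'.+1 =>
    if (a == 1) || (a == r - 1) then (a * i + r - 1) %% r
    else if a <= i then tau_fuel n' (r - a) (r %% (r - a)) (i %% (r - a))
    else (r - a) + tau_fuel n' a ((a - r %% a) %% a) i
  end.

Definition tau (r a i : nat) : nat := tau_fuel r r a i.

Local Open Scope ring_scope.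

(* T-invariant Q-divisors on the Danilov resolution Y: rational combinations of
   the T-invariant prime divisors, indexed by the rays of Sigma(r,a):
   None <-> E_1 (ray e_1), Some k <-> D_k (ray p_k), k = 0..r. *)
Definition Div (r : nat) := {ffun option 'I_r.+1 -> rat}.

Definition E1 (r : nat) : Div r := [ffun x => if x is None then 1 else 0].
Definition Dk (r k : nat) : Div r :=
  [ffun x => if x is Some j then (nat_of_ord j == k)%:R else 0].

(* Y_{i-a} = sum_{k=0}^{tau(i)} D_k, i.e. Y_j = sum_{k <= tau(<j+a>_r)} D_k *)
Definition Ydiv (r a j : nat) : Div r :=
  \sum_(k < r.+1 | (k <= tau r a ((j + a) %% r))%N) Dk r k.
Definition Zdiv (r a i : nat) : Div r :=
  \sum_(k < r.+1 | (tau r a (i %% r) < k)%N) Dk r k.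

(* coordinates of p_k = (1/r)(<-kb>_r, r-k, k), b an inverse of a mod r *)
Definition e1p (r b k : nat) : rat := ((r - (k * b) %% r) %% r)%:R / r%:R.
Definition e2p (r k : nat) : rat := (r - k)%:R / r%:R.
Definition e3p (r k : nat) : rat := k%:R / r%:R.

Definition dscale (r : nat) (c : rat) (D : Div r) : Div r := [ffun x => c * D x].

Definition DX (r b : nat) : Div r := E1 r + \sum_(k < r.+1) dscale r (e1p r b k) (Dk r k).
Definition DY (r : nat) : Div r := \sum_(k < r.+1) dscale r (e2p r k) (Dk r k).
Definition DZ (r : nat) : Div r := \sum_(k < r.+1) dscale r (e3p r k) (Dk r k).

Definition isXfamily (r a : nat) (X : nat -> Div r) : Prop :=
  X 0%N = E1 r /\
  forall i, (i < r)%N ->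
    X i + Zdiv r a ((i + 1) %% r)%N = Zdiv r a i + X ((i + r - a) %% r)%N.

Definition isRfamily (r a : nat) (R : nat -> Div r) : Prop :=
  R 0%N = 0 /\
  forall i, (i < r)%N -> Zdiv r a i = DZ r + R i - R ((i + r - a) %% r)%N.

From HB Require Import structures.
From mathcomp Require Import all_boot all_order all_algebra.
From mathcomp Require Import zify ring lra.
Import Order.TTheory GRing.Theory Num.Theory.

(* Let b be the inverse of a modulo r.  The recursion defining tau follows a
   Farey-type descent of the pair (r, b): with q = (ab - 1)/r, the pairs
   (r - a, b - q) and (a, q) are again inverse pairs, and b/r is a Farey
   neighbour of both (b - q)/(r - a) and q/a.  Along this descent, tau is a
   permutation of {0, ..., r-1} such that k |-> ceil(kb/r) jumps at tau(i)
   exactly when i > 0 and it jumps at i - 1.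

   Going around the orbit i_t = (t+1)a mod r, the relation
   Z_i = D_Z + R_i - R_{i-a} forces R_{ja} = sum_{t<j} (Z_{i_t} - D_Z).  As tau
   is a permutation the sum over the whole orbit vanishes, so this formula
   defines an R-family, and the sum of its first b terms counts the jumps of
   ceil(kb/r) below each k; since ceil(kb/r) = (kb + <-kb>_r)/r this gives
   R_1 = D_X - E_1.  Hence D_X + R_i - R_{i+1} satisfies the recursion which
   determines the X_i, and Y_i + Z_{i+a} = D_Y + D_Z gives the relation for Y. *)

Lemma modn_inj_window m a i j : a <= i < a + m -> a <= j < a + m ->
  i %% m = j %% m -> i = j.
Proof.
wlog Hij : i j / i <= j.
  by move=> W hi hj E; case: (leqP i j) => H; [|apply/esym]; apply: W => //; apply: ltnW.
move=> /andP [h1 h2] /andP [h3 h4] E.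
have m0 : 0 < m by lia.
have : m %| j - i by rewrite -eqn_mod_dvd // E.
case: (posnP (j - i)) => H0; first by lia.
by move/(dvdn_leq H0); lia.
Qed.

Lemma modn_mul_inverse r a b x : (a * b) %% r = 1 -> x %% r = ((x * a) %% r * b) %% r.
Proof. by move=> hab; rewrite modnMml -mulnA -modnMmr hab muln1. Qed.

Lemma modn_addBm r a x : a <= r -> (x %% r + r - a) %% r = (x + r - a) %% r.
Proof. by move=> har; rewrite -!addnBA // modnDml. Qed.

Lemma orbit_pred r a j : a <= r -> ((j.+1 * a) %% r + r - a) %% r = (j * a) %% r.
Proof.
move=> har; rewrite modn_addBm //.
have -> : j.+1 * a + r - a = j * a + r by rewrite mulSn; lia.
exact: modnDr.
Qed.

(** * Jumps of ceil(k b / r) *)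

Definition jump (r b m : nat) : Prop := exists n, b * m <= n * r /\ n * r < b * m + b.

Definition ceil_ratio (r b k : nat) : nat := (b * k + r - 1) %/ r.

(* The steps m at which k |-> ceil(k b / r) increases, see [ceil_ratioS]. *)
Definition jumpb (r b m : nat) : bool := ceil_ratio r b m * r < b * m + b.

Lemma ceil_ratio_bounds r b k : 0 < r ->
  b * k <= ceil_ratio r b k * r < b * k + r.
Proof.
move=> hr; rewrite /ceil_ratio.
have := divn_eq (b * k + r - 1) r; have := ltn_pmod (b * k + r - 1) hr.
lia.
Qed.

Lemma jumpP r b m : 0 < r -> reflect (jump r b m) (jumpb r b m).
Proof.
move=> hr; rewrite /jumpb; have /andP [h1 h2] := ceil_ratio_bounds r b m hr.
apply: (iffP idP) => [H | [n [h3 h4]]]; first by exists (ceil_ratio r b m); lia.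
have : ceil_ratio r b m <= n.
  rewrite -ltnS -(ltn_pmul2r hr) mulSn; lia.
move=> H; nia.
Qed.

Lemma ceil_ratioS r b k : 0 < r -> b < r ->
  ceil_ratio r b k.+1 = ceil_ratio r b k + jumpb r b k.
Proof.
move=> hr hb; rewrite /jumpb.
have /andP [h1 h2] := ceil_ratio_bounds r b k hr.
have /andP [h3 h4] := ceil_ratio_bounds r b k.+1 hr.
move: h3 h4; rewrite mulnS => h3 h4.
set c := ceil_ratio r b k in h1 h2 *; set c' := ceil_ratio r b k.+1 in h3 h4 *.
case: ltnP => H /=.
- have : c < c' by rewrite -(ltn_pmul2r hr); lia.
  have : c' < c.+2 by rewrite -(ltn_pmul2r hr) !mulSn; lia.
  lia.
- have : c' < c.+1 by rewrite -(ltn_pmul2r hr) mulSn; lia.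
  have : c < c'.+1 by rewrite -(ltn_pmul2r hr) mulSn; lia.
  lia.
Qed.

Lemma sum_jumpb r b k : 0 < r -> b < r -> \sum_(m < k) jumpb r b m = ceil_ratio r b k.
Proof.
move=> hr hb; elim: k => [|k IH].
  by rewrite big_ord0 /ceil_ratio muln0 add0n divn_small //; lia.
by rewrite big_ord_recr /= IH ceil_ratioS.
Qed.

Lemma ceil_ratio_mod r b k : 0 < r ->
  ceil_ratio r b k * r = b * k + (r - (k * b) %% r) %% r.
Proof.
move=> hr; have /andP [h1 h2] := ceil_ratio_bounds r b k hr.
have D := divn_eq (k * b) r; have M := ltn_pmod (k * b) hr.
rewrite [k * b]mulnC in D M *.
set c := ceil_ratio r b k in h1 h2 *.
set q := (b * k) %/ r in D; set m := (b * k) %% r in D M *.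
case: (posnP m) => H0.
- rewrite H0 subn0 modnn addn0.
  have -> : c = q.
    by apply/eqP; rewrite eqn_leq; apply/andP; split;
      rewrite -ltnS -(ltn_pmul2r hr) mulSn; lia.
  lia.
- rewrite modn_small; last lia.
  have -> : c = q.+1.
    by apply/eqP; rewrite eqn_leq; apply/andP; split;
      rewrite -ltnS -(ltn_pmul2r hr) mulSn; lia.
  rewrite mulSn; lia.
Qed.

Lemma jumpb_mod r b i : 0 < r -> b < r -> 0 < i -> jumpb r b i.-1 = (0 < (i * b) %% r <= b).
Proof.
move=> hr hbr; case: i => // p _ /=.
have D := divn_eq (p.+1 * b) r; have M := ltn_pmod (p.+1 * b) hr.
rewrite mulSn in D M *.
set u := (b + p * b) %/ r in D; set v := (b + p * b) %% r in D M *.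
apply/(jumpP _ _ _ hr)/idP => [[n [h1 h2]] | /andP [h1 h2]]; last by exists u; split; nia.
have nu : n = u.
  apply/eqP; rewrite eqn_leq; apply/andP; split;
    rewrite -ltnS -(ltn_pmul2r hr) mulSn; nia.
nia.
Qed.

Lemma jumpb_pred_mod r b i : 0 < r -> b < r -> 0 < i ->
  jumpb r b i.-1 = (0 < i %% r) && jumpb r b (i %% r).-1.
Proof.
move=> hr hbr hi; rewrite jumpb_mod //.
case: (posnP (i %% r)) => H /=; last by rewrite jumpb_mod // modnMml.
by rewrite -modnMml H mul0n mod0n.
Qed.

(* b/r and c/s are Farey neighbours, so no fraction with denominator at most
   m + 1 < r lies in [b/r, c/s). *)
Lemma jumpb_farey r b s c m : 0 < s -> r * c = s * b + 1 -> m.+1 < r ->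
  jumpb r b m = jumpb s c m.
Proof.
move=> hs E hm; have hr : 0 < r by apply: leq_ltn_trans hm.
have hc : 0 < c by nia.
apply/(jumpP _ _ _ hr)/(jumpP _ _ _ hs) => -[n [h1 h2]]; exists n.
- have nb : n < b by rewrite -(ltn_pmul2r hr); nia.
  split.
  + case: (leqP (c * m) (n * s)) => // H; exfalso.
    have : (n * s + 1) * b <= c * m * b by rewrite leq_mul2r; apply/orP; right; lia.
    nia.
  + case: (ltnP (n * s) (c * m + c)) => // H; exfalso.
    have : (c * m + c) * b <= n * s * b by rewrite leq_mul2r H orbT.
    nia.
- have nb : n < b.
    case: (ltnP n b) => // H; exfalso.
    have : b * s <= n * s by rewrite leq_mul2r H orbT.
    nia.
  split.
  + case: (leqP (b * m) (n * r)) => // H; exfalso.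
    have : (n * r + 1) * c <= b * m * c by rewrite leq_mul2r; apply/orP; right; lia.
    nia.
  + case: (ltnP (n * r) (b * m + b)) => // H; exfalso.
    have : (b * m + b) * c <= n * r * c by rewrite leq_mul2r H orbT.
    nia.
Qed.

Lemma jumpb_shift r b a q m : a * b = q * r + 1 -> 1 < r -> a <= r -> q <= b -> m < a ->
  jumpb r b (r - a + m) = jumpb a q m.
Proof.
move=> E hr /subnK Er /subnK Eb hm.
rewrite -{1}Er -{1}Eb; rewrite -Er -Eb in E hr; clear Er Eb.
move: (r - a) (b - q) E hr => s c E hr.
have E2 : (s + a) * c = s * (c + q) + 1 by nia.
have hc : 0 < c by nia.
have ha : 0 < a by lia.
apply/(jumpP _ _ _ (ltnW hr))/(jumpP _ _ _ ha) => -[n [h1 h2]].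
- have nc : c <= n.
    case: (leqP c n) => // H; exfalso.
    have : n * (s + a) <= (c - 1) * (s + a) by rewrite leq_mul2r; apply/orP; right; lia.
    nia.
  exists (n - c).
  have En : n = (n - c) + c by lia.
  rewrite En in h1 h2; set n' := n - c in h1 h2 *.
  have nq : n' < q.
    case: (ltnP n' q) => // H; exfalso.
    have : q * (s + a) <= n' * (s + a) by rewrite leq_mul2r H orbT.
    nia.
  split.
  + case: (leqP (q * m) (n' * a)) => // H; exfalso.
    have : (n' * a + 1) * (c + q) <= q * m * (c + q) by rewrite leq_mul2r; apply/orP; right; lia.
    nia.
  + case: (ltnP (n' * a) (q * m + q)) => // H; exfalso.
    have : (q * m + q) * (c + q) <= n' * a * (c + q) by rewrite leq_mul2r H orbT.
    nia.
- have nq : n < q.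
    case: (ltnP n q) => // H; exfalso.
    have : q * a <= n * a by rewrite leq_mul2r H orbT.
    nia.
  exists (n + c); split.
  + case: (leqP ((c + q) * (s + m)) ((n + c) * (s + a))) => // H; exfalso.
    have : (n * (s + a) + 2) * q <= (c + q) * m * q by rewrite leq_mul2r; apply/orP; right; nia.
    nia.
  + case: (ltnP ((n + c) * (s + a)) ((c + q) * (s + m) + (c + q))) => // H; exfalso.
    have : ((c + q) * m + (c + q)) * q <= (n * (s + a) + 1) * q by rewrite leq_mul2r; apply/orP; right; nia.
    nia.
Qed.

Lemma jumpb_last r b : 0 < r -> b < r -> jumpb r b r.-1 = false.
Proof.
move=> hr hb; apply/(jumpP _ _ _ hr) => -[n [h1 h2]].
have nb : n < b by rewrite -(ltn_pmul2r hr); nia.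
have : n * r <= (b - 1) * r by rewrite leq_mul2r; apply/orP; right; lia.
nia.
Qed.

Lemma jumpb_1 r m : 0 < m < r -> jumpb r 1 m = false.
Proof.
move=> /andP [hm0 hm]; apply/(jumpP _ _ _ (ltn_trans hm0 hm)) => -[n [h1 h2]].
case: (posnP n) => Hn; first by subst; lia.
have : r <= n * r by rewrite leq_pmull.
lia.
Qed.

Lemma jumpb_pred r m : m < r.-1 -> jumpb r r.-1 m.
Proof.
move=> hm; have hr : 0 < r by lia.
by apply/(jumpP _ _ _ hr); exists m; split; nia.
Qed.

(** * Inverse pairs and their Farey children *)

Definition inverse_mod (r a b : nat) : Prop := [/\ 1 < r, a < r, b < r & (a * b) %% r = 1].

Lemma inverse_mod_gt0 r a b : inverse_mod r a b -> 0 < a /\ 0 < b.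
Proof.
by case=> hr _ _ H; split; case: (posnP _) => // E; move: H; rewrite E ?mul0n ?muln0 mod0n.
Qed.

Lemma inverse_mod_base r a b : inverse_mod r a b -> (a == 1) || (a == r - 1) -> b = a.
Proof.
move=> hinv; have [_ hb0] := inverse_mod_gt0 _ _ _ hinv.
case: hinv => hr har hbr hab /orP [/eqP Ha | /eqP Ha]; subst a.
- by move: hab; rewrite mul1n modn_small.
- move: hab; have -> : (r - 1) * b = (b - 1) * r + (r - b) by nia.
  rewrite modnMDl modn_small; lia.
Qed.

Section InverseModChildren.

Variables r a b : nat.
Hypotheses (hab : inverse_mod r a b) (ha1 : 1 < a) (ha2 : a.+1 < r).

Local Notation q := ((a * b) %/ r).

Lemma inverse_mod_divn : a * b = q * r + 1.
Proof. by case: hab => _ _ _ E; rewrite {1}(divn_eq (a * b) r) E. Qed.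

Lemma inverse_mod_quotient : [/\ 0 < q, q < a & q < b].
Proof.
have E := inverse_mod_divn; case: hab => hr _ hbr _.
split.
- by case: (posnP q) E => [-> | //]; rewrite mul0n => /eqP; rewrite muln_eq1; lia.
- rewrite -(ltn_pmul2r (ltnW hr)); nia.
- rewrite -(ltn_pmul2l (ltnW ha1)); nia.
Qed.

Lemma inverse_mod_farey : r * (b - q) = (r - a) * b + 1.
Proof.
have E := inverse_mod_divn; have [q0 qa qb] := inverse_mod_quotient.
case: hab => hr _ hbr _; nia.
Qed.

Lemma inverse_mod_left : inverse_mod (r - a) (r %% (r - a)) (b - q).
Proof.
have E := inverse_mod_divn; have [q0 qa qb] := inverse_mod_quotient.
have E2 := inverse_mod_farey; case: hab => hr _ hbr _.
split; first lia.
- by rewrite ltn_pmod //; lia.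
- rewrite -(ltn_pmul2l (ltnW ha1)); nia.
- by rewrite modnMml E2 mulnC modnMDl modn_small //; lia.
Qed.

Lemma inverse_mod_right : inverse_mod a ((a - r %% a) %% a) q.
Proof.
have E := inverse_mod_divn; have [q0 qa qb] := inverse_mod_quotient.
have ha0 : 0 < a by lia.
split => //; first by rewrite ltn_pmod.
have s := ltn_pmod r ha0; have D := divn_eq r a.
rewrite modnMml -(modnMDl b).
have -> : b * a + (a - r %% a) * q = (q + (r %/ a) * q) * a + 1 by nia.
by rewrite modnMDl modn_small.
Qed.

End InverseModChildren.

Lemma inverse_mod_nonbase r a b : inverse_mod r a b -> ~~ ((a == 1) || (a == r - 1)) ->
  1 < a /\ a.+1 < r.
Proof. by move=> hinv; have [ha0 _] := inverse_mod_gt0 _ _ _ hinv; case: hinv; lia. Qed.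

(** * The permutation tau *)

Lemma tau_fuel_base n r a i : (a == 1) || (a == r - 1) ->
  tau_fuel n.+1 r a i = (a * i + r - 1) %% r.
Proof. by move=> h /=; rewrite h. Qed.

Lemma tau_fuel_rec n r a i : ~~ ((a == 1) || (a == r - 1)) ->
  tau_fuel n.+1 r a i =
    if a <= i then tau_fuel n (r - a) (r %% (r - a)) (i %% (r - a))
    else (r - a) + tau_fuel n a ((a - r %% a) %% a) i.
Proof. by move=> h /=; rewrite (negbTE h). Qed.

Lemma tau_fuel_lt n r a b i : inverse_mod r a b -> r <= n -> i < r ->
  tau_fuel n r a i < r.
Proof.
elim: n r a b i => [|n IH] r a b i hinv hn hi; first by case: hinv; lia.
case: (boolP ((a == 1) || (a == r - 1))) => hbase.
  by rewrite tau_fuel_base // ltn_pmod //; case: hinv; lia.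
have [ha1 ha2] := inverse_mod_nonbase _ _ _ hinv hbase.
rewrite tau_fuel_rec //; case: ifP => hai.
- have := IH _ _ _ (i %% (r - a)) (inverse_mod_left _ _ _ hinv ha1 ha2).
  by rewrite ltn_pmod; lia.
- have := IH _ _ _ i (inverse_mod_right _ _ _ hinv ha1 ha2); lia.
Qed.

Lemma tau_fuel_inj n r a b i j : inverse_mod r a b -> r <= n -> i < r -> j < r ->
  tau_fuel n r a i = tau_fuel n r a j -> i = j.
Proof.
elim: n r a b i j => [|n IH] r a b i j hinv hn hi hj; first by case: hinv; lia.
case: (boolP ((a == 1) || (a == r - 1))) => hbase.
  case: hinv => hr _ _ hab; rewrite !tau_fuel_base // -!addnBA 1?ltnW //.
  move/eqP; rewrite eqn_modDr => /eqP E.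
  rewrite -(modn_small hi) -(modn_small hj).
  by rewrite (modn_mul_inverse _ _ _ i hab) (modn_mul_inverse _ _ _ j hab) ![_ * a]mulnC E.
have [ha1 ha2] := inverse_mod_nonbase _ _ _ hinv hbase.
have hL := inverse_mod_left _ _ _ hinv ha1 ha2.
have hR := inverse_mod_right _ _ _ hinv ha1 ha2.
have ltL k := tau_fuel_lt n _ _ _ (k %% (r - a)) hL.
rewrite !tau_fuel_rec //; case: ifP => hai; case: ifP => haj.
- have hrn : r - a <= n by lia.
  have hr0 : 0 < r - a by lia.
  move/(IH _ _ _ _ _ hL hrn (ltn_pmod _ hr0) (ltn_pmod _ hr0)) => E.
  by apply: (modn_inj_window (r - a) a) E; lia.
- by have := ltL i; rewrite ltn_pmod; lia.
- by have := ltL j; rewrite ltn_pmod; lia.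
- by move/addnI; apply: (IH _ _ _ _ _ hR); lia.
Qed.

Lemma tau_base_jumpb r a b i : inverse_mod r a b -> (a == 1) || (a == r - 1) -> i < r ->
  (0 < i) && jumpb r b i.-1 = jumpb r b ((a * i + r - 1) %% r).
Proof.
move=> hinv hbase hi; have Eb := inverse_mod_base _ _ _ hinv hbase.
case: hinv => hr _ _ _; case/orP: hbase => /eqP Ha; subst a b.
- case: i hi => [|i] hi /=.
    by rewrite add0n modn_small ?jumpb_1 //; lia.
  have -> : 1 * i.+1 + r - 1 = 1 * r + i by lia.
  by rewrite modnMDl modn_small //; lia.
- have -> : (r - 1) * i + r - 1 = i * r + (r.-1 - i) by nia.
  rewrite modnMDl modn_small; last lia.
  case: i hi => [|i] hi /=; first by rewrite subn0 jumpb_last //; lia.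
  by rewrite subn1 !jumpb_pred //; lia.
Qed.

Lemma tau_fuel_jumpb n r a b i : inverse_mod r a b -> r <= n -> i < r ->
  (0 < i) && jumpb r b i.-1 = jumpb r b (tau_fuel n r a i).
Proof.
elim: n r a b i => [|n IH] r a b i hinv hn hi; first by case: hinv; lia.
case: (boolP ((a == 1) || (a == r - 1))) => hbase.
  by rewrite tau_fuel_base //; apply: tau_base_jumpb hinv hbase hi.
have [ha1 ha2] := inverse_mod_nonbase _ _ _ hinv hbase.
have hL := inverse_mod_left _ _ _ hinv ha1 ha2.
have hR := inverse_mod_right _ _ _ hinv ha1 ha2.
have EL := inverse_mod_farey _ _ _ hinv ha1 ha2.
have ER := inverse_mod_divn _ _ _ hinv.
have [q0 qa qb] := inverse_mod_quotient _ _ _ hinv ha1 ha2.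
set q := (a * b) %/ r in hL EL ER hR q0 qa qb.
have hrL : 0 < r - a by lia.
rewrite tau_fuel_rec //; case: ifP => hai.
- have hiL : i %% (r - a) < r - a by rewrite ltn_pmod.
  have hrn : r - a <= n by lia.
  have ltL := tau_fuel_lt n _ _ _ _ hL hrn hiL.
  have hi0 : 0 < i by lia.
  rewrite hi0 (jumpb_farey _ _ (r - a) (b - q)) //; last lia.
  have [_ _ hbL _] := hL.
  rewrite jumpb_pred_mod // (IH _ _ _ _ hL) //.
  by rewrite /= (jumpb_farey _ _ (r - a) (b - q)) //; lia.
- have hi0 : (0 < i) && jumpb r b i.-1 = (0 < i) && jumpb a q i.-1.
    case: i hi hai => [|i] hi hai //=.
    by rewrite (jumpb_farey a q r b) //; lia.
  rewrite hi0 (IH _ _ _ _ hR); try lia.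
  have ltR : tau_fuel n a ((a - r %% a) %% a) i < a.
    by apply: (tau_fuel_lt _ _ _ _ _ hR); lia.
  by rewrite (jumpb_shift _ _ _ q) //; lia.
Qed.

Lemma tau_lt r a b i : inverse_mod r a b -> i < r -> tau r a i < r.
Proof. by move=> hinv; apply: tau_fuel_lt hinv (leqnn r). Qed.

Lemma tau_inj r a b i j : inverse_mod r a b -> i < r -> j < r -> tau r a i = tau r a j -> i = j.
Proof. by move=> hinv; apply: tau_fuel_inj hinv (leqnn r). Qed.

Lemma tau_jumpb r a b i : inverse_mod r a b -> i < r ->
  (0 < i) && jumpb r b i.-1 = jumpb r b (tau r a i).
Proof. by move=> hinv; apply: tau_fuel_jumpb hinv (leqnn r). Qed.

(** * Counting along the orbit of a *)

Lemma orbit_inj r a b s t : inverse_mod r a b -> s < r -> t < r ->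
  (s.+1 * a) %% r = (t.+1 * a) %% r -> s = t.
Proof.
case=> _ _ _ hab hs ht /(congr1 (fun x => (x * b) %% r)).
rewrite -!(modn_mul_inverse _ _ _ _ hab) => /(modn_inj_window r 1) E.
by apply/eq_add_S/E; lia.
Qed.

Lemma sum_tau_orbit r a b (F : nat -> nat) : inverse_mod r a b ->
  \sum_(t < r) F (tau r a ((t.+1 * a) %% r)) = \sum_(m < r) F m.
Proof.
move=> hinv; have [hr _ _ _] := hinv.
have hlt (t : 'I_r) : tau r a ((t.+1 * a) %% r) < r.
  by rewrite (tau_lt _ _ _ _ hinv) // ltn_pmod //; lia.
pose s (t : 'I_r) : 'I_r := Ordinal (hlt t).
have s_inj : injective s.
  move=> x y /(congr1 val) /= /(tau_inj _ _ _ _ _ hinv).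
  rewrite !ltn_pmod; try lia.
  by move=> /(_ isT isT) /(orbit_inj _ _ _ _ _ hinv (ltn_ord x) (ltn_ord y)) /val_inj.
by rewrite [RHS](reindex_inj s_inj).
Qed.

Lemma sum_nat_widen n k (G : nat -> nat) : k <= n ->
  \sum_(t < k) G t = \sum_(t < n) (t < k) * G t.
Proof.
move=> hk; rewrite (big_ord_widen n G hk) big_mkcond /=.
by apply: eq_bigr => t _; case: (t < k); rewrite ?mul1n ?mul0n.
Qed.

Lemma sum_tau_orbit_lt r a b k : inverse_mod r a b -> k <= r ->
  \sum_(t < r) (tau r a ((t.+1 * a) %% r) < k) = k.
Proof.
move=> hinv hk; rewrite (sum_tau_orbit _ _ _ (fun m => nat_of_bool (m < k)) hinv).
rewrite -{2}[k]card_ord -sum1_card (sum_nat_widen r k (fun _ => 1)) //.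
by apply: eq_bigr => t _; rewrite muln1.
Qed.

Lemma orbit_jumpb r a b t : inverse_mod r a b -> t < r ->
  (t < b) = (0 < (t.+1 * a) %% r) && jumpb r b ((t.+1 * a) %% r).-1.
Proof.
move=> [hr _ hbr hab] ht.
have B := modn_mul_inverse _ _ _ t.+1 hab.
case: (posnP ((t.+1 * a) %% r)) => H /=.
- move: B; rewrite H mul0n mod0n.
  by case: (ltnP t.+1 r) => H'; [rewrite modn_small | lia].
- rewrite jumpb_mod ?(ltnW hr) // -B.
  case: (ltnP t.+1 r) => H'; first by rewrite modn_small //; lia.
  have -> : t.+1 = r by lia.
  by rewrite modnn /=; lia.
Qed.

Lemma sum_tau_orbit_lt_inverse r a b k : inverse_mod r a b -> k <= r ->
  \sum_(t < b) (tau r a ((t.+1 * a) %% r) < k) = ceil_ratio r b k.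
Proof.
move=> hinv hk; have [hr _ hbr _] := hinv.
rewrite (sum_nat_widen r b (fun t => nat_of_bool (tau r a ((t.+1 * a) %% r) < k))) 1?ltnW //.
rewrite -sum_jumpb ?(sum_nat_widen r k (fun m => nat_of_bool (jumpb r b m))) //; try lia.
rewrite -(sum_tau_orbit _ _ _ (fun m => (m < k) * jumpb r b m) hinv).
apply: eq_bigr => t _ /=.
rewrite (orbit_jumpb _ _ _ _ hinv (ltn_ord t)) (tau_jumpb _ _ _ _ hinv) ?ltn_pmod //; last lia.
by rewrite mulnC.
Qed.

(** * Q-divisors *)

Local Open Scope ring_scope.

Lemma ffun0E (aT : finType) (R : zmodType) x : (0 : {ffun aT -> R}) x = 0.
Proof. by rewrite ffunE. Qed.

Lemma ffunDE (aT : finType) (R : zmodType) (f g : {ffun aT -> R}) x : (f + g) x = f x + g x.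
Proof. by rewrite ffunE. Qed.

Lemma ffunNE (aT : finType) (R : zmodType) (f : {ffun aT -> R}) x : (- f) x = - f x.
Proof. by rewrite ffunE. Qed.

Lemma ffunBE (aT : finType) (R : zmodType) (f g : {ffun aT -> R}) x : (f - g) x = f x - g x.
Proof. by rewrite ffunDE ffunNE. Qed.

Ltac coordinatewise :=
  intros; let x := fresh "x" in
  apply/ffunP => x;
  repeat match goal with H : _ = _ |- _ => move/ffunP/(_ x): H end;
  rewrite ?ffunDE ?ffunBE ?ffunNE ?ffun0E; intros; lra.

Lemma sum_Dk_Some r (P : pred nat) (j : 'I_r.+1) :
  (\sum_(k < r.+1 | P k) Dk r k) (Some j) = (P j)%:R.
Proof.
rewrite sum_ffunE big_mkcond (bigD1 j) //= big1 => [|k /negbTE hk]; rewrite !ffunE /=.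
  by rewrite eqxx; case: (P j); rewrite addr0.
by rewrite (inj_eq val_inj) eq_sym hk; case: (P k).
Qed.

Lemma sum_Dk_None r (P : pred nat) : (\sum_(k < r.+1 | P k) Dk r k) None = 0.
Proof. by rewrite sum_ffunE big1 // => k _; rewrite ffunE. Qed.

Lemma sum_dscale_Some r (F : nat -> rat) (j : 'I_r.+1) :
  (\sum_(k < r.+1) dscale r (F k) (Dk r k)) (Some j) = F j.
Proof.
rewrite sum_ffunE (bigD1 j) //= big1 => [|k /negbTE hk]; rewrite !ffunE /=.
  by rewrite eqxx mulr1 addr0.
by rewrite (inj_eq val_inj) eq_sym hk mulr0.
Qed.

Lemma sum_dscale_None r (F : nat -> rat) : (\sum_(k < r.+1) dscale r (F k) (Dk r k)) None = 0.
Proof. by rewrite sum_ffunE big1 // => k _; rewrite !ffunE mulr0. Qed.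

Lemma Ydiv_add_Zdiv r a i : (0 < r)%N ->
  Ydiv r a i + Zdiv r a ((i + a) %% r) = DY r + DZ r.
Proof.
move=> hr; have rnz : r%:R != 0 :> rat by rewrite pnatr_eq0; lia.
apply/ffunP => -[j|]; rewrite !ffunDE /Ydiv /Zdiv /DY /DZ.
- rewrite (sum_Dk_Some _ (fun k => k <= _)%N) sum_Dk_Some !sum_dscale_Some modn_mod.
  rewrite /e2p /e3p natrB; last by rewrite -ltnS.
  rewrite -mulrDl subrK divff //.
  by case: leqP.
- by rewrite (sum_Dk_None _ (fun k => k <= _)%N) sum_Dk_None !sum_dscale_None addr0.
Qed.

Definition XofR (r b : nat) (R : nat -> Div r) (i : nat) : Div r :=
  DX r b + R i - R ((i + 1) %% r)%N.

Definition Rcanon (r a b i : nat) : Div r :=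
  \sum_(t < (i * b) %% r) (Zdiv r a ((t.+1 * a) %% r)%N - DZ r).

Section DanilovDivisors.

Variables r a b : nat.
Hypothesis hinv : inverse_mod r a b.

Local Notation Zstep t := (Zdiv r a ((t.+1 * a) %% r)%N - DZ r).

Lemma Zstep_Some (t : nat) (j : 'I_r.+1) :
  Zstep t (Some j) = (tau r a ((t.+1 * a) %% r) < j)%:R - j%:R / r%:R.
Proof. by rewrite ffunBE /Zdiv sum_Dk_Some modn_mod /DZ sum_dscale_Some. Qed.

Lemma Zstep_None t : Zstep t None = 0.
Proof. by rewrite ffunBE /Zdiv sum_Dk_None /DZ sum_dscale_None subr0. Qed.

Lemma sum_Zstep_orbit : \sum_(t < r) Zstep t = 0.
Proof.
have [hr _ _ _] := hinv; have rnz : r%:R != 0 :> rat by rewrite pnatr_eq0; lia.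
apply/ffunP => -[j|]; rewrite sum_ffunE ffunE; last by rewrite big1 // => t _; rewrite Zstep_None.
under eq_bigr => t _ do rewrite Zstep_Some.
rewrite sumrB sumr_const card_ord -natr_sum (sum_tau_orbit_lt _ _ _ _ hinv); last by rewrite -ltnS.
by rewrite -mulr_natr; field.
Qed.

Lemma sum_Zstep_inverse : \sum_(t < b) Zstep t = DX r b - E1 r.
Proof.
have [hr _ _ _] := hinv; have rnz : r%:R != 0 :> rat by rewrite pnatr_eq0; lia.
apply/ffunP => -[j|]; rewrite sum_ffunE ffunBE /DX ffunDE !ffunE /=.
- under eq_bigr => t _ do rewrite Zstep_Some.
  rewrite sumrB sumr_const card_ord -natr_sum (sum_tau_orbit_lt_inverse _ _ _ _ hinv); last by rewrite -ltnS.
  rewrite sum_dscale_Some /e1p add0r subr0.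
  have -> : (ceil_ratio r b j)%:R = (b * j + (r - (j * b) %% r) %% r)%:R / r%:R :> rat.
    by rewrite -ceil_ratio_mod ?natrM ?mulfK //; lia.
  by rewrite natrD natrM -mulr_natr; field.
- rewrite sum_dscale_None addr0 subrr.
  by rewrite big1 // => t _; rewrite Zstep_None.
Qed.

Lemma Rfamily_orbit R : isRfamily r a R ->
  forall j, (j <= r)%N -> R ((j * a) %% r)%N = \sum_(t < j) Zstep t.
Proof.
have [hr har _ _] := hinv; case=> R0 HR; elim=> [|j IH] hj.
  by rewrite mul0n mod0n big_ord0.
rewrite big_ord_recr /= -IH 1?ltnW //.
have := HR _ (ltn_pmod (j.+1 * a) (ltnW hr)); rewrite orbit_pred 1?ltnW //.
coordinatewise.
Qed.

Lemma Rfamily_1 R : isRfamily r a R -> R 1%N = DX r b - E1 r.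
Proof.
move=> hR; have [_ _ hbr hab] := hinv.
by rewrite -sum_Zstep_inverse -(Rfamily_orbit _ hR) 1?ltnW // mulnC hab.
Qed.

Lemma XofR_isX R : isRfamily r a R -> isXfamily r a (XofR r b R).
Proof.
move=> hR; have [hr har _ _] := hinv; have [R0 HR] := hR.
split.
  have := Rfamily_1 _ hR; rewrite /XofR add0n modn_small // R0.
  coordinatewise.
move=> i hi; have := HR _ hi; have := HR _ (ltn_pmod (i + 1) (ltnW hr)).
have -> : (((i + 1) %% r + r - a) %% r = (((i + r - a) %% r) + 1) %% r)%N.
  by rewrite modn_addBm 1?ltnW // modnDml; congr (_ %% _)%N; lia.
rewrite /XofR; coordinatewise.
Qed.

Lemma Xfamily_unique X X' : isXfamily r a X -> isXfamily r a X' ->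
  forall i, (i < r)%N -> X i = X' i.
Proof.
have [hr har _ hab] := hinv; move=> [X0 HX] [X'0 HX'] i hi.
rewrite -(modn_small hi) (modn_mul_inverse r b a i); last by rewrite mulnC.
elim: ((i * b) %% r)%N => [|j IH]; first by rewrite mul0n mod0n X0 X'0.
have := HX _ (ltn_pmod (j.+1 * a) (ltnW hr)); have := HX' _ (ltn_pmod (j.+1 * a) (ltnW hr)).
rewrite orbit_pred 1?ltnW // IH.
coordinatewise.
Qed.

Lemma Rcanon_isR : isRfamily r a (Rcanon r a b).
Proof.
have [hr har hbr hab] := hinv.
split=> [|i hi]; first by rewrite /Rcanon mul0n mod0n big_ord0.
set p := ((i + r - a) %% r)%N; set j := ((p * b) %% r)%N.
have hba : ((b * a) %% r = 1)%N by rewrite mulnC.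
have Ep : p = ((j * a) %% r)%N by rewrite /j -(modn_mul_inverse _ _ _ _ hba) /p modn_mod.
have Ei : i = ((j.+1 * a) %% r)%N.
  rewrite mulSn -modnDmr -Ep /p modnDmr.
  have -> : (a + (i + r - a) = r + i)%N by lia.
  by rewrite modnDl modn_small.
have Eij : ((i * b) %% r = j.+1 %% r)%N by rewrite (modn_mul_inverse _ _ _ j.+1 hab) -Ei.
have Rp : Rcanon r a b p = \sum_(t < j) Zstep t by [].
case: (ltnP j.+1 r) => hj.
- have Ri : Rcanon r a b i = Rcanon r a b p + (Zdiv r a i - DZ r).
    by rewrite /Rcanon Eij modn_small // big_ord_recr /= -Ei.
  coordinatewise.
- have hjr : (j < r)%N by rewrite /j ltn_pmod // ltnW.
  have hj' : j.+1 = r by apply/eqP; rewrite eqn_leq hj hjr.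
  have Ri : Rcanon r a b i = 0 by rewrite /Rcanon Eij hj' modnn big_ord0.
  have : \sum_(t < j.+1) Zstep t = 0 by rewrite hj'; exact: sum_Zstep_orbit.
  rewrite big_ord_recr /= -Ei -Rp.
  coordinatewise.
Qed.

Lemma Ydiv_Rfamily R : isRfamily r a R ->
  forall i, (i < r)%N -> Ydiv r a i = DY r + R i - R ((i + a) %% r)%N.
Proof.
have [hr har _ _] := hinv; move=> [_ HR] i hi.
have := HR _ (ltn_pmod (i + a) (ltnW hr)); have := Ydiv_add_Zdiv r a i (ltnW hr).
rewrite modn_addBm 1?ltnW // (_ : (i + a + r - a = i + r)%N); last lia.
rewrite modnDr (modn_small hi).
coordinatewise.
Qed.

End DanilovDivisors.

Lemma DX_modn r b : DX r (b %% r) = DX r b.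
Proof. by rewrite /DX; congr (_ + _); apply: eq_bigr => k _; rewrite /e1p modnMmr. Qed.

Theorem mainTheorem8 (r a b : nat) (hr : (1 < r)%N) (ha0 : (0 < a)%N) (har : (a < r)%N)
    (hcop : coprime r a) (hb : ((a * b) %% r)%N = 1%N) :
  (exists X : nat -> Div r, isXfamily r a X) /\
  (exists R : nat -> Div r, isRfamily r a R) /\
  (forall (X R : nat -> Div r), isXfamily r a X -> isRfamily r a R ->
    forall i, (i < r)%N ->
      [/\ X i = DX r b + R i - R ((i + 1) %% r)%N,
          Ydiv r a i = DY r + R i - R ((i + a) %% r)%N &
          Zdiv r a i = DZ r + R i - R ((i + r - a) %% r)%N]).
Proof.
(* [ha0] and [hcop] follow from [hb]. *)
have hinv : inverse_mod r a (b %% r) by split; rewrite ?ltn_pmod ?modnMmr //; lia.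
have hX R : isRfamily r a R -> isXfamily r a (XofR r b R).
  by rewrite /XofR -DX_modn; apply: XofR_isX.
have hRcanon := Rcanon_isR _ _ _ hinv.
split; first by exists (XofR r b (Rcanon r a (b %% r))); apply: hX.
split; first by exists (Rcanon r a (b %% r)).
move=> X R hXX hR i hi; split.
- exact: Xfamily_unique hinv _ _ hXX (hX R hR) i hi.
- exact: Ydiv_Rfamily hinv R hR i hi.
- exact: hR.2 i hi.
Qed.
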